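(* Let $x,y>0$ with $x\ne y$, and define for $t\in(-\min\{x,y\},\infty)$ \[ G_{x,y}(t)=G(x+t,y+t)=\sqrt{(x+t)(y+t)}\,. \] Then $G_{x,y}(t)$ is a Bernstein function of $t$ on $(-\min\{x,y\},\infty)$.
   Context: For positive numbers $a,b$, the geometric mean is $G(a,b)=\sqrt{ab}$. A function $f$ on an interval $I\subseteq\mathbb{R}$ is completely monotonic on $I$ if it has derivatives of all orders on $I$ and $(-1)^n f^{(n)}(t)\ge 0$ for all $t\in I$ and all integers $n\ge0$. A function $f:I\to[0,\infty)$ is a Bernstein function on $I$ if it has derivatives of all orders and $f'$ is completely monotonic on $I$. *)

From Stdlib Require Import Reals.
From Coquelicot Require Import Coquelicot.
Open Scope R_scope.

Definition smooth_on (I : R -> Prop) (f : R -> R) : Prop :=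
  forall (n : nat) (t : R), I t -> ex_derive_n f n t.

Definition completely_monotonic (I : R -> Prop) (f : R -> R) : Prop :=
  smooth_on I f /\
  forall (n : nat) (t : R), I t -> 0 <= (-1) ^ n * Derive_n f n t.

Definition bernstein (I : R -> Prop) (f : R -> R) : Prop :=
  (forall t, I t -> 0 <= f t) /\ smooth_on I f /\
  completely_monotonic I (Derive f).

From Stdlib Require Import Reals Lra Lia Wf_nat.
From Coquelicot Require Import Coquelicot.
Open Scope R_scope.

(* Write [P a b t = (x+t)^(-a) (y+t)^(-b)].  Differentiation sends [P a b] to
   [-(a P (a+1) b + b P a (b+1))], so for [a, b >= 0] the signs of the successive
   derivatives of [P a b] alternate by induction on the order, i.e. [P a b] is
   completely monotonic.  Now [G_{x,y} = P (-1/2) (-1/2)], whose derivative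
   [(P (1/2) (-1/2) + P (-1/2) (1/2)) / 2] is nonnegative, and
   [G'' = - (x - y)^2 / 4 * P (3/2) (3/2)], so [-G''] is completely monotonic. *)

Lemma Derive_n_Sn (f : R -> R) (n : nat) (t : R) :
  Derive_n f (S n) t = Derive_n (Derive f) n t.
Proof. rewrite <- Nat.add_1_r. symmetry. exact (Derive_n_comp f n 1 t). Qed.

Lemma Derive_n_S_sign (f : R -> R) (n : nat) (t : R) :
  (-1) ^ S n * Derive_n f (S n) t = (-1) ^ n * Derive_n (fun z => - Derive f z) n t.
Proof. rewrite Derive_n_Sn, Derive_n_opp. simpl. ring. Qed.

Lemma smooth_on_Derive (D : R -> Prop) (f : R -> R) :
  smooth_on D f -> smooth_on D (Derive f).
Proof.
  intros Hf [|n] t Ht; [exact I|].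
  apply ex_derive_ext with (f := Derive_n f (S n)).
  - intros z. apply Derive_n_Sn.
  - exact (Hf (S (S n)) t Ht).
Qed.

Lemma completely_monotonic_scal (D : R -> Prop) (c : R) (f : R -> R) :
  0 <= c -> completely_monotonic D f -> completely_monotonic D (fun t => c * f t).
Proof.
  intros Hc [Hf Hsign]. split.
  - intros n t Ht. apply ex_derive_n_scal_l, Hf, Ht.
  - intros n t Ht. rewrite Derive_n_scal_l.
    specialize (Hsign n t Ht). nra.
Qed.

Lemma completely_monotonic_of_Derive (D : R -> Prop) (f : R -> R) :
  (forall t, D t -> 0 <= f t) -> smooth_on D f ->
  completely_monotonic D (fun t => - Derive f t) -> completely_monotonic D f.
Proof.
  intros Hpos Hf [_ Hsign]. split; [exact Hf|].
  intros [|n] t Ht.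
  - simpl. rewrite Rmult_1_l. exact (Hpos t Ht).
  - rewrite Derive_n_S_sign. exact (Hsign n t Ht).
Qed.

Section Open_domain.

Variable D : R -> Prop.
Hypothesis D_open : open D.

Lemma Derive_n_ext_on (f g : R -> R) (n : nat) (t : R) :
  (forall z, D z -> f z = g z) -> D t -> Derive_n f n t = Derive_n g n t.
Proof.
  intros Hfg Ht. apply Derive_n_ext_loc.
  exact (filter_imp _ _ Hfg (D_open t Ht)).
Qed.

Lemma smooth_on_ext (f g : R -> R) :
  (forall z, D z -> f z = g z) -> smooth_on D g -> smooth_on D f.
Proof.
  intros Hfg Hg n t Ht. apply ex_derive_n_ext_loc with (f := g).
  - apply (filter_imp _ _ (fun z Hz => eq_sym (Hfg z Hz)) (D_open t Ht)).
  - exact (Hg n t Ht).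
Qed.

Lemma completely_monotonic_ext (f g : R -> R) :
  (forall z, D z -> f z = g z) -> completely_monotonic D g -> completely_monotonic D f.
Proof.
  intros Hfg [Hg Hsign]. split.
  - exact (smooth_on_ext f g Hfg Hg).
  - intros n t Ht. rewrite (Derive_n_ext_on f g n t Hfg Ht). exact (Hsign n t Ht).
Qed.

Lemma Derive_n_S_on (f g : R -> R) (n : nat) (t : R) :
  (forall z, D z -> is_derive f z (g z)) -> D t ->
  Derive_n f (S n) t = Derive_n g n t.
Proof.
  intros Hfg Ht. rewrite Derive_n_Sn. apply Derive_n_ext_on; [|exact Ht].
  intros z Hz. exact (is_derive_unique _ _ _ (Hfg z Hz)).
Qed.

Lemma ex_derive_n_S_on (f g : R -> R) (n : nat) (t : R) :
  (forall z, D z -> is_derive f z (g z)) -> D t ->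
  ex_derive_n g n t -> ex_derive_n f (S n) t.
Proof.
  intros Hfg Ht Hg. destruct n as [|n].
  - exists (g t). exact (Hfg t Ht).
  - apply ex_derive_ext_loc with (f := Derive_n g n); [|exact Hg].
    apply (filter_imp _ _ (fun z Hz => eq_sym (Derive_n_S_on f g n z Hfg Hz)) (D_open t Ht)).
Qed.

Section Linear_combination.

Variables (a b : R) (f g : R -> R) (n : nat).
Hypothesis f_smooth : forall k, (k <= n)%nat -> forall z, D z -> ex_derive_n f k z.
Hypothesis g_smooth : forall k, (k <= n)%nat -> forall z, D z -> ex_derive_n g k z.

Let locally_scal_smooth (c : R) (h : R -> R) (t : R) :
  (forall k, (k <= n)%nat -> forall z, D z -> ex_derive_n h k z) -> D t ->
  locally t (fun z => forall k, (k <= n)%nat -> ex_derive_n (fun u => c * h u) k z).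
Proof.
  intros Hh Ht.
  apply (filter_imp _ _ (fun z Hz k Hk => ex_derive_n_scal_l _ _ _ _ (Hh k Hk z Hz))).
  exact (D_open t Ht).
Qed.

Lemma ex_derive_n_lincomb_on (t : R) :
  D t -> ex_derive_n (fun z => a * f z + b * g z) n t.
Proof.
  intros Ht. apply ex_derive_n_plus; apply locally_scal_smooth; assumption.
Qed.

Lemma Derive_n_lincomb_on (t : R) :
  D t -> Derive_n (fun z => a * f z + b * g z) n t = a * Derive_n f n t + b * Derive_n g n t.
Proof.
  intros Ht. rewrite Derive_n_plus by (apply locally_scal_smooth; assumption).
  rewrite !Derive_n_scal_l. reflexivity.
Qed.

End Linear_combination.

End Open_domain.

Section Shifted_powers.

Variables x y : R.

Definition shift_domain (t : R) : Prop := - Rmin x y < t.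

(* [(x+t)^(-a) (y+t)^(-b)], written with [exp] and [ln]; it agrees with the
   power product only on [shift_domain], where [x + t] and [y + t] are positive. *)
Definition pow_prod (a b t : R) : R := exp (- a * ln (x + t) - b * ln (y + t)).

Lemma shift_domain_open : open shift_domain.
Proof. exact (open_gt _). Qed.

Lemma shift_domain_pos (t : R) : shift_domain t -> 0 < x + t /\ 0 < y + t.
Proof. unfold shift_domain. generalize (Rmin_l x y) (Rmin_r x y). lra. Qed.

Lemma pow_prod_pos (a b t : R) : 0 < pow_prod a b t.
Proof. apply exp_pos. Qed.

Lemma pow_prod_succ_l (a a' b t : R) :
  a' = a + 1 -> shift_domain t -> pow_prod a b t = pow_prod a' b t * (x + t).
Proof.
  intros -> Ht. destruct (shift_domain_pos t Ht) as [Hx _]. unfold pow_prod.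
  rewrite <- (exp_ln (x + t)) at 3 by exact Hx. rewrite <- exp_plus. f_equal. ring.
Qed.

Lemma pow_prod_succ_r (a b b' t : R) :
  b' = b + 1 -> shift_domain t -> pow_prod a b t = pow_prod a b' t * (y + t).
Proof.
  intros -> Ht. destruct (shift_domain_pos t Ht) as [_ Hy]. unfold pow_prod.
  rewrite <- (exp_ln (y + t)) at 3 by exact Hy. rewrite <- exp_plus. f_equal. ring.
Qed.

Lemma is_derive_pow_prod (a b t : R) : shift_domain t ->
  is_derive (pow_prod a b) t ((- a) * pow_prod (a + 1) b t + (- b) * pow_prod a (b + 1) t).
Proof.
  intros Ht. destruct (shift_domain_pos t Ht) as [Hx Hy].
  assert (Hl : pow_prod (a + 1) b t = pow_prod a b t / (x + t)).
  { rewrite (pow_prod_succ_l a (a + 1) b t) by easy. field. lra. }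
  assert (Hr : pow_prod a (b + 1) t = pow_prod a b t / (y + t)).
  { rewrite (pow_prod_succ_r a b (b + 1) t) by easy. field. lra. }
  rewrite Hl, Hr. unfold pow_prod. auto_derive; [repeat split; lra|].
  unfold Rminus. rewrite Ropp_mult_distr_l. field. lra.
Qed.

Lemma pow_prod_smooth (a b : R) : smooth_on shift_domain (pow_prod a b).
Proof.
  intros n. revert a b. induction n as [n IH] using lt_wf_ind. intros a b t Ht.
  destruct n as [|n]; [exact I|].
  apply (ex_derive_n_S_on _ shift_domain_open _ _ _ _ (fun z Hz => is_derive_pow_prod a b z Hz) Ht).
  apply (ex_derive_n_lincomb_on _ shift_domain_open); [| |exact Ht];
    intros k Hk z Hz; apply IH; [lia|exact Hz|lia|exact Hz].
Qed.

Lemma Derive_n_S_pow_prod (a b : R) (n : nat) (t : R) : shift_domain t ->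
  Derive_n (pow_prod a b) (S n) t
  = (- a) * Derive_n (pow_prod (a + 1) b) n t + (- b) * Derive_n (pow_prod a (b + 1)) n t.
Proof.
  intros Ht.
  rewrite (Derive_n_S_on _ shift_domain_open _ _ _ _ (fun z Hz => is_derive_pow_prod a b z Hz) Ht).
  apply (Derive_n_lincomb_on _ shift_domain_open); [| |exact Ht];
    intros k _ z Hz; apply pow_prod_smooth, Hz.
Qed.

Lemma pow_prod_completely_monotonic (a b : R) :
  0 <= a -> 0 <= b -> completely_monotonic shift_domain (pow_prod a b).
Proof.
  intros Ha Hb. split; [apply pow_prod_smooth|].
  intros n. revert a b Ha Hb. induction n as [|n IH]; intros a b Ha Hb t Ht.
  - simpl. generalize (pow_prod_pos a b t). lra.
  - rewrite (Derive_n_S_pow_prod a b n t Ht).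
    assert (Hl := IH (a + 1) b ltac:(lra) Hb t Ht).
    assert (Hr := IH a (b + 1) Ha ltac:(lra) t Ht).
    simpl. nra.
Qed.

Lemma Derive2_pow_prod (a b t : R) : shift_domain t ->
  Derive (Derive (pow_prod a b)) t
  = a * (a + 1) * pow_prod (a + 1 + 1) b t + 2 * a * b * pow_prod (a + 1) (b + 1) t
    + b * (b + 1) * pow_prod a (b + 1 + 1) t.
Proof.
  intros Ht. change (Derive (Derive (pow_prod a b)) t) with (Derive_n (pow_prod a b) 2 t).
  rewrite Derive_n_S_pow_prod by exact Ht. simpl.
  rewrite !(is_derive_unique _ _ _ (is_derive_pow_prod _ _ t Ht)). ring.
Qed.

Lemma sqrt_prod_pow_prod (t : R) : shift_domain t ->
  sqrt ((x + t) * (y + t)) = pow_prod (-(1/2)) (-(1/2)) t.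
Proof.
  intros Ht. destruct (shift_domain_pos t Ht) as [Hx Hy].
  rewrite <- (sqrt_square (pow_prod _ _ t)) by apply Rlt_le, pow_prod_pos.
  f_equal. unfold pow_prod. rewrite <- exp_plus.
  replace (- - (1 / 2) * ln (x + t) - - (1 / 2) * ln (y + t)
           + (- - (1 / 2) * ln (x + t) - - (1 / 2) * ln (y + t)))
    with (ln (x + t) + ln (y + t)) by field.
  rewrite exp_plus, !exp_ln by assumption. reflexivity.
Qed.

Lemma sqrt_prod_smooth : smooth_on shift_domain (fun u => sqrt ((x + u) * (y + u))).
Proof.
  apply (smooth_on_ext _ shift_domain_open _ _ sqrt_prod_pow_prod), pow_prod_smooth.
Qed.

Lemma Derive_sqrt_prod (t : R) : shift_domain t ->
  Derive (fun u => sqrt ((x + u) * (y + u))) t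
  = (pow_prod (1/2) (-(1/2)) t + pow_prod (-(1/2)) (1/2) t) / 2.
Proof.
  intros Ht. change (Derive ?f t) with (Derive_n f 1 t).
  rewrite (Derive_n_ext_on _ shift_domain_open _ _ 1 t sqrt_prod_pow_prod Ht).
  rewrite (Derive_n_S_pow_prod _ _ 0 t Ht). simpl.
  replace (-(1/2) + 1) with (1/2) by lra. field.
Qed.

Lemma Derive2_sqrt_prod (t : R) : shift_domain t ->
  Derive (Derive (fun u => sqrt ((x + u) * (y + u)))) t
  = - ((x - y) ^ 2 / 4) * pow_prod (3/2) (3/2) t.
Proof.
  intros Ht.
  change (Derive (Derive ?f) t) with (Derive_n f 2 t).
  rewrite (Derive_n_ext_on _ shift_domain_open _ _ 2 t sqrt_prod_pow_prod Ht).
  change (Derive_n ?f 2 t) with (Derive (Derive f) t).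
  rewrite Derive2_pow_prod by exact Ht.
  replace (-(1/2) + 1 + 1) with (3/2) by lra. replace (-(1/2) + 1) with (1/2) by lra.
  set (Q := pow_prod (3/2) (3/2) t).
  assert (E1 : pow_prod (1/2) (1/2) t = Q * (x + t) * (y + t)).
  { rewrite (pow_prod_succ_l _ (3/2)), (pow_prod_succ_r _ _ (3/2)) by (lra || easy).
    unfold Q. ring. }
  assert (E2 : pow_prod (3/2) (-(1/2)) t = Q * (y + t) ^ 2).
  { rewrite (pow_prod_succ_r _ _ (1/2)), (pow_prod_succ_r _ (1/2) (3/2)) by (lra || easy).
    unfold Q. ring. }
  assert (E3 : pow_prod (-(1/2)) (3/2) t = Q * (x + t) ^ 2).
  { rewrite (pow_prod_succ_l _ (1/2)), (pow_prod_succ_l (1/2) (3/2)) by (lra || easy).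
    unfold Q. ring. }
  rewrite E1, E2, E3. field.
Qed.

End Shifted_powers.

Theorem theorem4p1 (x y : R) (hx : 0 < x) (hy : 0 < y) (hxy : x <> y) :
  bernstein (fun t => - Rmin x y < t) (fun t => sqrt ((x + t) * (y + t))).
Proof.
  change (fun t => - Rmin x y < t) with (shift_domain x y).
  split; [intros t _; apply sqrt_pos|split; [apply sqrt_prod_smooth|]].
  apply completely_monotonic_of_Derive; [|apply smooth_on_Derive, sqrt_prod_smooth|].
  - intros t Ht. rewrite Derive_sqrt_prod by exact Ht.
    generalize (pow_prod_pos x y (1/2) (-(1/2)) t) (pow_prod_pos x y (-(1/2)) (1/2) t). lra.
  - apply (completely_monotonic_ext _ (shift_domain_open x y) _
             (fun t => (x - y) ^ 2 / 4 * pow_prod x y (3/2) (3/2) t)).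
    + intros t Ht. rewrite Derive2_sqrt_prod by exact Ht. ring.
    + apply completely_monotonic_scal; [nra|].
      apply pow_prod_completely_monotonic; lra.
Qed.
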